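(* Let $v_1,\dots,v_n$ be non-zero vectors in $\mathbb{C}^n$ and let $\mathcal{A}\subseteq M_n(\mathbb{C})$ be the algebra generated by $$A_1=\sum_{j=1}^n v_1(j)E_{1,j},\ \dots,\ A_n=\sum_{j=1}^n v_n(j)E_{n,j}.$$ Then there exist $k\in\{1,\dots,n\}$, a non-zero vector $v\in\mathbb{C}^k$ and a unitary $U\in M_n(\mathbb{C})$ such that $$\sum_{j=1}^k v(j)E_{1,j},\ \dots,\ \sum_{j=1}^k v(j)E_{k,j}\in U\mathcal{A}U^*.$$
   Context: $E_{i,j}$ denote the matrix units of $M_n(\mathbb{C})$; $v(j)$ denotes the $j$-th coordinate of a vector $v$. *)

(* C is modelled by algC (algebraic complex numbers,
   a numClosedFieldType with complex conjugation). *)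
From HB Require Import structures.
From mathcomp Require Import all_boot all_order all_algebra all_field.
Set Implicit Arguments. Unset Strict Implicit. Unset Printing Implicit Defensive.
Import Order.TTheory GRing.Theory Num.Theory.
Local Open Scope ring_scope.

Definition ctrmx n (U : 'M[algC]_n) : 'M[algC]_n := (map_mx Num.conj U)^T.

Definition unitary n (U : 'M[algC]_n) : Prop := U *m ctrmx U = 1%:M.

Definition rowUnit n (i : 'I_n) (v : 'rV[algC]_n) : 'M[algC]_n :=
  \sum_(j < n) v 0 j *: delta_mx i j.

Definition rowUnitk n k (hk : (k <= n)%N) (i : 'I_k) (v : 'rV[algC]_k) : 'M[algC]_n :=
  \sum_(j < k) v 0 j *: delta_mx (widen_ord hk i) (widen_ord hk j).

(* the (non-unital) subalgebra of M_n generated by a set of matrices: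
   the smallest subset containing the generators and closed under
   addition, scalar multiplication and matrix product *)
Inductive gen_alg n (G : 'M[algC]_n -> Prop) : 'M[algC]_n -> Prop :=
  | ga_gen M : G M -> gen_alg G M
  | ga_add M N : gen_alg G M -> gen_alg G N -> gen_alg G (M + N)
  | ga_scale (a : algC) M : gen_alg G M -> gen_alg G (a *: M)
  | ga_mul M N : gen_alg G M -> gen_alg G N -> gen_alg G (M *m N).

(* Draw an edge i -> l whenever v_i(l) != 0.  Since A_i A_l = v_i(l) B_i, where
   B_i is the matrix whose i-th row is v_l, following edges shows that the
   matrix with i-th row v_j lies in the algebra whenever j is reachable from i.
   Pick j in a terminal strongly connected class T of this graph: the support
   of v_j lies in T, and every row indexed by T can carry v_j.  A permutation
   matrix moving T to the first #|T| coordinates finishes the proof. *)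
From HB Require Import structures.
From mathcomp Require Import all_boot all_order all_algebra all_field all_fingroup.
Import Order.TTheory GRing.Theory Num.Theory.
Local Open Scope ring_scope.

Lemma rowUnitE n (i : 'I_n) v a b : rowUnit i v a b = (a == i)%:R * v 0 b.
Proof.
rewrite /rowUnit summxE (bigD1 b) //= big1 => [|t tb]; last first.
  by rewrite !mxE [b == t]eq_sym (negbTE tb) andbF mulr0.
by rewrite !mxE eqxx andbT addr0 eq_sym mulrC.
Qed.

Lemma rowUnitM n (i l : 'I_n) v w :
  rowUnit i v *m rowUnit l w = v 0 l *: rowUnit i w.
Proof.
apply/matrixP=> a b; rewrite !mxE (bigD1 l) //= big1 => [|t tl]; last first.
  by rewrite !rowUnitE (negbTE tl) mul0r mulr0.
by rewrite !rowUnitE eqxx mul1r addr0 mulrCA mulrA.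
Qed.

Lemma perm_mx_unitary n (s : 'S_n) : unitary (perm_mx s).
Proof.
by rewrite /unitary /ctrmx map_perm_mx tr_perm_mx -perm_mxM mulgV perm_mx1.
Qed.

Lemma perm_conj_rowUnit n (s : 'S_n) i w :
  perm_mx s *m rowUnit i w *m ctrmx (perm_mx s) =
  rowUnit (s^-1 i)%g (col_perm s w).
Proof.
rewrite /ctrmx map_perm_mx tr_perm_mx -row_permE -col_permE.
apply/matrixP => a b; rewrite !mxE !rowUnitE.
by rewrite -{1}(permKV s i) (inj_eq perm_inj) mxE.
Qed.

Section Truncation.

Variables (n k : nat) (hk : (k <= n)%N) (w : 'rV[algC]_n).
Hypothesis w_vanish : forall b : 'I_n, (k <= b)%N -> w 0 b = 0.

Let wk : 'rV[algC]_k := \row_c w 0 (widen_ord hk c).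

Lemma rowUnitk_truncation (i : 'I_k) :
  rowUnitk hk i wk = rowUnit (widen_ord hk i) w.
Proof.
rewrite /rowUnit (bigID (fun b : 'I_n => (b < k)%N)) /=.
rewrite [X in _ + X]big1 ?addr0 => [|b]; last first.
  by rewrite -leqNgt => /w_vanish ->; rewrite scale0r.
by rewrite big_ord_narrow; apply: eq_bigr => c _; rewrite mxE.
Qed.

Lemma truncation_neq0 : w != 0 -> wk != 0.
Proof.
apply: contra_neq => /rowP wk0; apply/rowP => b; rewrite mxE.
have [hb | /w_vanish //] := ltnP b k.
have := wk0 (Ordinal hb); rewrite !mxE.
by congr (w 0 _ = _); apply: val_inj.
Qed.

End Truncation.

Lemma gen_alg_rowUnit_connect n (vs : 'I_n -> 'rV[algC]_n) i j :
  connect [rel a b | vs a 0 b != 0] i j ->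
  gen_alg (fun M => exists i, M = rowUnit i (vs i)) (rowUnit i (vs j)).
Proof.
have gen l : gen_alg (fun M => exists i, M = rowUnit i (vs i)) (rowUnit l (vs l)).
  by apply: ga_gen; exists l.
case/connectP=> p; elim: p i => [|l p IH] i /= => [_ ->|/andP[eil pl] hj].
  exact: gen.
have -> : rowUnit i (vs j) = (vs i 0 l)^-1 *: (rowUnit i (vs i) *m rowUnit l (vs j)).
  by rewrite rowUnitM scalerA mulVf // scale1r.
exact/ga_scale/ga_mul/(IH l pl hj)/gen.
Qed.

(* A vertex with an inclusion-minimal reachable set lies in a terminal class. *)
Lemma exists_terminal_vertex {T : finType} (e : rel T) (x : T) :
  exists j, forall l, connect e j l -> connect e l j.
Proof.
pose R j := [set l | connect e j l].
have [j _ jmin] := @arg_minnP _ x predT (fun j => #|R j|) isT.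
exists j => l jl.
have sub : R l \subset R j.
  by apply/subsetP => y; rewrite !inE; apply: connect_trans jl.
have /eqP Rlj : R l == R j by rewrite eqEcard sub jmin.
have : j \in R l by rewrite Rlj inE connect0.
by rewrite inE.
Qed.

Lemma perm_to_prefix {n} (A : {set 'I_n}) :
  exists s : 'S_n, forall b, (s b \in A) = (b < #|A|)%N.
Proof.
have pe : perm_eq (enum A ++ enum (~: A)) (ord_tuple n).
  apply: uniq_perm.
  - rewrite cat_uniq !enum_uniq andbT /=; apply/hasPn => x.
    by rewrite !mem_enum inE.
  - exact: (enum_uniq (T := 'I_n) predT).
  - by move=> x; rewrite mem_cat !mem_enum in_setC orbN.
have [s Es] := tuple_permP pe.
exists s => b.
have -> : s b = nth b (enum A ++ enum (~: A)) b.
  have := tnth_mktuple (fun i => tnth (ord_tuple n) (s i)) b.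
  by rewrite (tnth_nth b) -Es tnth_ord_tuple.
rewrite nth_cat -cardE; case: ifP => hb.
  by have := @mem_nth _ b (enum A) b; rewrite -cardE mem_enum; apply.
have hl : (b - #|A| < size (enum (~: A)))%N.
  rewrite -cardE -(ltn_add2l #|A|) subnKC; last by rewrite leqNgt hb.
  by rewrite cardsC card_ord ltn_ord.
by have := mem_nth b hl; rewrite mem_enum in_setC => /negbTE.
Qed.

Theorem lemma4 (n : nat) (hn : (0 < n)%N) (vs : 'I_n -> 'rV[algC]_n)
    (hvs : forall i, vs i != 0) :
  let A := @gen_alg n (fun M => exists i : 'I_n, M = rowUnit i (vs i)) in
  exists k : nat, exists hk : (k <= n)%N, (0 < k)%N /\
    exists (v : 'rV[algC]_k) (U : 'M[algC]_n),
      [/\ v != 0, unitary U &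
          forall i : 'I_k, exists B, A B /\ rowUnitk hk i v = U *m B *m ctrmx U].
Proof.
move=> A; set e := [rel a b : 'I_n | vs a 0 b != 0].
have [j j_terminal] := exists_terminal_vertex e (Ordinal hn).
pose T := [set l | connect e j l].
have [s sT] := perm_to_prefix T.
have hk : (#|T| <= n)%N by rewrite -[leqRHS]card_ord max_card.
pose w := col_perm s (vs j).
have w_vanish (b : 'I_n) : (#|T| <= b)%N -> w 0 b = 0.
  rewrite leqNgt -sT inE mxE => /negP jb.
  by apply/eqP/negPn/negP => vjb; apply/jb/connect1.
have w_neq0 : w != 0.
  apply: contra_neq (hvs j) => /rowP w0; apply/rowP => b.
  by have := w0 (s^-1 b)%g; rewrite !mxE permKV.
exists #|T|, hk; split; first by rewrite card_gt0; apply/set0Pn; exists j; rewrite inE.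
exists (\row_c w 0 (widen_ord hk c)), (perm_mx s); split.
- exact: truncation_neq0.
- exact: perm_mx_unitary.
move=> i; exists (rowUnit (s (widen_ord hk i)) (vs j)); split.
  have : s (widen_ord hk i) \in T by rewrite sT /= ltn_ord.
  by rewrite inE => /j_terminal /gen_alg_rowUnit_connect.
by rewrite perm_conj_rowUnit permK rowUnitk_truncation.
Qed.
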